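(* Let $X_0=0$ and $X_n=\sum_{j=1}^{X_{n-1}}\xi_{n,j}+\varepsilon_n$ for $n\ge1$, where $\{\xi_{n,j},\varepsilon_n\}$ are independent nonnegative integer-valued random variables with $\xi_{n,j}$, $j\in\mathbb N$, identically distributed for each $n$. Let $G_n(x)=\mathbb E x^{\xi_{n,1}}$, $H_n(x)=\mathbb E x^{\varepsilon_n}$, $\rho_n=G_n'(1)$, $G_n''(1)<\infty$, and $m_{n,k}=H_n^{(k)}(1)$ (the $k$-th factorial moment of $\varepsilon_n$, assumed finite for all $k$). Assume (i) $\rho_n<1$, $\lim_n\rho_n=1$, $\sum_{n=1}^\infty(1-\rho_n)=\infty$, and $\lim_n G_n''(1)/(1-\rho_n)=0$; (ii) $\lim_{n\to\infty}\frac{m_{n,j}}{j(1-\rho_n)}=\lambda_j$ exists (finite) for every $j=1,2,\dots$, and $\limsup_{n\to\infty}(\lambda_n/n!)^{1/n}\le 1$. Then $X_n$ converges in distribution to a random variable $Y$ with generating function $$\mathbb E x^Y=\exp\Big\{\sum_{l=1}^\infty\frac{(x-1)^l}{l!}\lambda_l\Big\},\qquad x\in(0,1).$$ *)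

(* classical reals. Laws of nat-valued random variables are
   represented by their probability mass functions nat -> R. *)
From Stdlib Require Import Reals Lra Lia.
Open Scope R_scope.

Definition is_pmf (p : nat -> R) : Prop :=
  (forall k, 0 <= p k) /\ infinite_sum p 1.

Definition delta0 (k : nat) : R := if Nat.eqb k 0 then 1 else 0.

(* convolution of laws = law of the sum of independent variables *)
Definition conv (a b : nat -> R) (k : nat) : R :=
  sum_f_R0 (fun i => a i * b (k - i)%nat) k.

Fixpoint convpow (a : nat -> R) (m : nat) : nat -> R :=
  match m with
  | O => delta0
  | S m' => conv a (convpow a m')
  end.

Fixpoint fallfact (j k : nat) : nat :=
  match k with
  | O => 1%nat
  | S k' => (j - k') * fallfact j k'
  end.

(* M is the k-th factorial moment of the law p (finite): E[X(X-1)..(X-k+1)] = M,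
   i.e. M = G^{(k)}(1) for the generating function G of p *)
Definition fmoment (p : nat -> R) (k : nat) (M : R) : Prop :=
  infinite_sum (fun j => INR (fallfact j k) * p j) M.

(* p n is the law of X_n, where X_0 = 0 and
   X_n = sum_{j=1}^{X_{n-1}} xi_{n,j} + eps_n, with xi_{n,j} ~ g n i.i.d.,
   eps_n ~ h n, all independent. *)
Definition bpi_law (g h : nat -> nat -> R) (p : nat -> nat -> R) : Prop :=
  p O = delta0 /\
  forall n k,
    infinite_sum (fun m => p n m * conv (convpow (g (S n)) m) (h (S n)) k)
                 (p (S n) k).

Definition limsup_le_1 (a : nat -> R) : Prop :=
  forall eps, eps > 0 -> exists N, forall n, (n >= N)%nat -> a n <= 1 + eps.

Definition nroot (n : nat) (x : R) : R :=
  if Rle_dec x 0 then 0 else Rpower x (/ INR n).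

From Stdlib Require Import Reals Arith Factorial Lra Lia Classical IndefiniteDescription.
From Coquelicot Require Import Coquelicot.
Open Scope R_scope.

(* Write G_k, H_k for the generating functions of the offspring and
   immigration laws of generation k. Unfolding the law recursion gives
     E x^(X_n) = prod_(k=1..n) H_k (G_(k+1) o ... o G_n (x)).
   Fix x in (0,1), put r = 1 - x and u n k = 1 - G_(k+1) o ... o G_n (x), so
   u n n = r and, by second order Taylor bounds of G_k at 1,
     rho_k u n k - G_k''(1) (u n k)^2 / 2 <= u n (k-1) <= rho_k u n k.
   Hence u n k -> 0 for fixed k (the series of 1 - rho_k diverges) and,
   telescoping powers of the recursion, sum_(k<=n) (1 - rho_k) a_k (u n k)^j
   -> a r^j / j whenever a_k -> a (a Toeplitz-type argument). Bonferroni
   bounds express 1 - H_k (1 - u) through the factorial moments m k j ~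
   j (1 - rho_k) lam_j, so sum_k (1 - H_k (1 - u n k)) -> - L(x) with
   L(x) = sum_l (x-1)^l lam_l / l!, and the product tends to exp (L x).
   A continuity theorem for generating functions, with L(x) -> 0 as x -> 1
   guaranteeing that no mass is lost, concludes. *)

Local Notation sums := infinite_sum.

Lemma cv_const c : Un_cv (fun _ => c) c.
Proof. intros e he. exists 0%nat. intros. unfold Rdist. rewrite Rminus_diag, Rabs_R0. lra. Qed.

Lemma cv_ext u v l : (forall n, u n = v n) -> Un_cv u l -> Un_cv v l.
Proof. intros E H e he. destruct (H e he) as [N HN]. exists N. intros n hn. rewrite <- E. auto. Qed.

Lemma cv_ext_eventually u v l :
  (exists N, forall n, (n >= N)%nat -> u n = v n) -> Un_cv u l -> Un_cv v l.
Proof.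
  intros [N0 E] H e he. destruct (H e he) as [N HN]. exists (max N N0). intros n hn.
  rewrite <- E by lia. apply HN; lia.
Qed.

Lemma cv_scal c u l : Un_cv u l -> Un_cv (fun n => c * u n) (c * l).
Proof. intro H. apply (CV_mult (fun _ => c)); auto. apply cv_const. Qed.

Lemma cv_pow u l j : Un_cv u l -> Un_cv (fun n => u n ^ j) (l ^ j).
Proof. intro H. induction j; simpl. apply cv_const. apply CV_mult; auto. Qed.

Lemma cv_lower_bound (u : nat -> R) l c : (forall n, c <= u n) -> Un_cv u l -> c <= l.
Proof. intros H Hu. apply (Rle_cv_lim (Un := fun _ => c) (Vn := u)); auto. apply cv_const. Qed.

Lemma cv_upper_bound (u : nat -> R) l c : (forall n, u n <= c) -> Un_cv u l -> l <= c.
Proof. intros H Hu. apply (Rle_cv_lim (Un := u) (Vn := fun _ => c)); auto. apply cv_const. Qed.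

Lemma cv_nonneg_eventually u l :
  (exists N, forall n, (n >= N)%nat -> 0 <= u n) -> Un_cv u l -> 0 <= l.
Proof.
  intros [N HN] H. destruct (Rle_lt_dec 0 l); auto. destruct (H (- l) ltac:(lra)) as [N1 H1].
  specialize (H1 (max N N1) ltac:(lia)). specialize (HN (max N N1) ltac:(lia)).
  unfold Rdist in H1. apply Rabs_def2 in H1. lra.
Qed.

Lemma cv_squeeze u v w l :
  (exists N, forall n, (n >= N)%nat -> u n <= v n <= w n) ->
  Un_cv u l -> Un_cv w l -> Un_cv v l.
Proof.
  intros [N0 B] Hu Hw e he. destruct (Hu e he) as [N1 H1]. destruct (Hw e he) as [N2 H2].
  exists (max N0 (max N1 N2)). intros n hn. specialize (B n ltac:(lia)).
  specialize (H1 n ltac:(lia)). specialize (H2 n ltac:(lia)). unfold Rdist in *.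
  apply Rabs_def2 in H1. apply Rabs_def2 in H2. apply Rabs_def1; lra.
Qed.

Lemma cv_sum (u : nat -> nat -> R) l K :
  (forall k, (k <= K)%nat -> Un_cv (fun n => u n k) (l k)) ->
  Un_cv (fun n => sum_f_R0 (u n) K) (sum_f_R0 l K).
Proof.
  intro H. induction K; simpl. apply H; lia.
  apply (CV_plus (fun n => sum_f_R0 (u n) K) (fun n => u n (S K))).
  - apply IHK. intros; apply H; lia.
  - apply H; lia.
Qed.

Lemma geometric_tail x eps : 0 < x < 1 -> eps > 0 ->
  exists N, forall K, (K >= N)%nat -> x ^ S K / (1 - x) < eps.
Proof.
  intros hx he.
  destruct (pow_lt_1_zero x ltac:(rewrite Rabs_pos_eq; lra) (eps * (1 - x)) ltac:(nra)) as [N HN].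
  exists N. intros K hK. specialize (HN (S K) ltac:(lia)).
  rewrite Rabs_pos_eq in HN by (apply pow_le; lra).
  apply (Rmult_lt_reg_r (1 - x)). lra. unfold Rdiv. rewrite Rmult_assoc, Rinv_l; lra.
Qed.

Lemma pow_le1 x n : 0 <= x <= 1 -> x ^ n <= 1.
Proof. intro H. rewrite <- (pow1 n). apply pow_incr. lra. Qed.

Lemma pow_m1_cases N : (-1) ^ N = 1 \/ (-1) ^ N = -1.
Proof. induction N. left; simpl; auto. simpl. destruct IHN as [e|e]; rewrite e; [right|left]; ring. Qed.

Lemma sums_ext a b l : (forall n, a n = b n) -> sums a l -> sums b l.
Proof. intros E H. apply (cv_ext (sum_f_R0 a)); auto. intro n. apply sum_eq. auto. Qed.

Lemma sums_eq a b l1 l2 : sums a l1 -> (forall n, a n = b n) -> l1 = l2 -> sums b l2.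
Proof. intros H E <-. revert H. apply sums_ext; auto. Qed.

Lemma sums_plus a b la lb : sums a la -> sums b lb -> sums (fun n => a n + b n) (la + lb).
Proof.
  intros Ha Hb. apply (cv_ext (fun n => sum_f_R0 a n + sum_f_R0 b n)).
  - intro. now rewrite sum_plus.
  - now apply CV_plus.
Qed.

Lemma sums_scal c a l : sums a l -> sums (fun n => c * a n) (c * l).
Proof.
  intros H. apply (cv_ext (fun n => c * sum_f_R0 a n)).
  - intro. rewrite scal_sum. apply sum_eq. intros; ring.
  - now apply cv_scal.
Qed.

Lemma sums_le a b la lb : sums a la -> sums b lb -> (forall n, a n <= b n) -> la <= lb.
Proof. intros Ha Hb H. apply (Rle_cv_lim (fun n => sum_Rle a b n (fun k _ => H k)) Ha Hb). Qed.

Lemma sums_nonneg a l : sums a l -> (forall n, 0 <= a n) -> 0 <= l.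
Proof.
  intros H P. apply (sums_le (fun _ => 0) a); auto.
  apply (cv_ext (fun _ => 0)). intro n. induction n; simpl; lra. apply cv_const.
Qed.

Lemma sums_partial_le a l N : sums a l -> (forall n, 0 <= a n) -> sum_f_R0 a N <= l.
Proof. intros H P. apply sum_incr; auto. Qed.

Lemma sums_bounded a M : (forall n, 0 <= a n) -> (forall N, sum_f_R0 a N <= M) ->
  exists l, sums a l /\ l <= M.
Proof.
  intros P B. destruct (growing_cv (sum_f_R0 a)) as [l Hl].
  - intro n. simpl. specialize (P (S n)). lra.
  - exists M. intros x [n ->]. auto.
  - exists l. split; auto. apply (cv_upper_bound _ _ _ B Hl).
Qed.

Lemma sums_dominated a b lb : (forall n, 0 <= a n <= b n) -> sums b lb ->
  exists l, sums a l /\ l <= lb.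
Proof.
  intros P Hb. apply sums_bounded. intro n; apply P.
  intro N. apply Rle_trans with (sum_f_R0 b N).
  - apply sum_Rle. intros; apply P.
  - apply sum_incr; auto. intro n. destruct (P n); lra.
Qed.

Lemma sums_finsum (a : nat -> nat -> R) c K :
  (forall k, (k <= K)%nat -> sums (fun m => a m k) (c k)) ->
  sums (fun m => sum_f_R0 (fun k => a m k) K) (sum_f_R0 c K).
Proof.
  intro H. induction K; simpl. apply H; lia.
  apply sums_plus. apply IHK; intros; apply H; lia. apply H; lia.
Qed.

Lemma sums_tonelli (a : nat -> nat -> R) b c B :
  (forall m k, 0 <= a m k) -> (forall m, sums (a m) (b m)) ->
  (forall k, sums (fun m => a m k) (c k)) -> sums b B -> sums c B.
Proof.
  intros P Hb Hc HB.
  assert (Pc : forall k, 0 <= c k) by (intro k; apply (sums_nonneg _ _ (Hc k)); auto).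
  assert (Pb : forall m, 0 <= b m) by (intro m; apply (sums_nonneg _ _ (Hb m)); auto).
  destruct (sums_bounded c B Pc) as [C [HC HCB]].
  { intro K. apply (sums_le _ _ _ _ (sums_finsum a c K (fun k _ => Hc k)) HB). intro m.
    apply (sums_partial_le (a m)); auto. }
  assert (B <= C).
  { apply (cv_upper_bound (sum_f_R0 b)); auto. intro M.
    apply (sums_le _ _ _ _ (sums_finsum (fun k m => a m k) b M (fun m _ => Hb m)) HC).
    intro k. apply (sums_partial_le (fun m => a m k)); auto. }
  replace B with C by lra. auto.
Qed.

Lemma Series_sums a l : sums a l -> Series a = l.
Proof. intro H. apply is_series_unique. now apply is_series_Reals. Qed.

Lemma sums_abs_dominated (t b : nat -> R) lb :
  (forall i, Rabs (t i) <= b i) -> sums b lb -> exists l, sums t l.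
Proof.
  intros H I. destruct (ex_series_le t b) as [l Hl].
  - intro n. apply H.
  - exists lb. now apply is_series_Reals.
  - exists l. now apply is_series_Reals.
Qed.

(** * Probability generating functions *)

Definition pgf (a : nat -> R) (s : R) : R := Series (fun i => a i * s ^ i).

Lemma pgf_sums a s : is_pmf a -> 0 <= s <= 1 ->
  sums (fun i => a i * s ^ i) (pgf a s) /\ 0 <= pgf a s <= 1.
Proof.
  intros [P S] Hs.
  assert (T : forall n, 0 <= a n * s ^ n <= a n).
  { intro n. split. apply Rmult_le_pos; auto. apply pow_le; lra.
    rewrite <- (Rmult_1_r (a n)) at 2. apply Rmult_le_compat_l; auto. apply pow_le1; lra. }
  destruct (sums_dominated _ a 1 T S) as [l [Hl Hl1]].
  unfold pgf. rewrite (Series_sums _ _ Hl). repeat split; auto.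
  apply (sums_nonneg _ _ Hl). intro n. apply T.
Qed.

Lemma pgf_1 a : is_pmf a -> pgf a 1 = 1.
Proof. intros [P S]. apply Series_sums. apply (sums_ext a); auto. intro; rewrite pow1; ring. Qed.

(* A generating function is positive on (0,1], as some a i is positive. *)
Lemma pgf_pos a s : is_pmf a -> 0 < s <= 1 -> 0 < pgf a s.
Proof.
  intros Pa Hs. destruct (pgf_sums a s Pa ltac:(lra)) as [I _].
  assert (Pt : forall j, 0 <= a j * s ^ j) by (intro; apply Rmult_le_pos; [apply Pa|apply pow_le; lra]).
  destruct (classic (exists i, a i > 0)) as [[i Hi]|Hn].
  - apply Rlt_le_trans with (sum_f_R0 (fun j => a j * s ^ j) i).
    + destruct i; simpl. nra. apply Rplus_le_lt_0_compat. apply cond_pos_sum; auto.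
      apply Rmult_lt_0_compat; auto. apply Rmult_lt_0_compat; [lra|apply pow_lt; lra].
    + apply sums_partial_le; auto.
  - exfalso. destruct Pa as [P S].
    assert (Z : forall i, a i = 0) by (intro i; destruct (P i); auto; exfalso; apply Hn; exists i; lra).
    assert (sums a 0).
    { apply (sums_ext (fun _ => 0)). intro; symmetry; apply Z.
      apply (cv_ext (fun _ => 0)). intro n; induction n; simpl; lra. apply cv_const. }
    pose proof (uniqueness_sum _ _ _ S H). lra.
Qed.

Lemma conv_sums a b s la lb : (forall n, 0 <= a n) -> (forall n, 0 <= b n) -> 0 <= s ->
  sums (fun i => a i * s ^ i) la -> sums (fun i => b i * s ^ i) lb ->
  sums (fun k => conv a b k * s ^ k) (la * lb).
Proof.
  intros Pa Pb Hs Ha Hb. apply is_series_Reals in Ha. apply is_series_Reals in Hb.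
  pose proof (is_series_mult_pos _ _ _ _ Ha Hb) as H. apply is_series_Reals in H.
  2,3: intro; apply Rmult_le_pos; auto; apply pow_le; auto.
  revert H. apply sums_ext. intro k.
  unfold conv. rewrite Rmult_comm, scal_sum. apply sum_eq. intros i Hi.
  replace (s ^ k) with (s ^ i * s ^ (k - i)). ring. rewrite <- pow_add. f_equal. lia.
Qed.

Lemma conv_pmf a b : is_pmf a -> is_pmf b -> is_pmf (conv a b) /\
  forall s, 0 <= s <= 1 -> pgf (conv a b) s = pgf a s * pgf b s.
Proof.
  intros Ha Hb.
  assert (G : forall s, 0 <= s <= 1 -> sums (fun k => conv a b k * s ^ k) (pgf a s * pgf b s)).
  { intros s Hs. apply conv_sums; try apply Ha; try apply Hb; try lra; apply pgf_sums; auto. }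
  split.
  - split.
    + intro k. unfold conv. apply cond_pos_sum. intro; apply Rmult_le_pos; [apply Ha|apply Hb].
    + apply (sums_eq _ _ _ _ (G 1 ltac:(lra))). intro; rewrite pow1; ring. rewrite !pgf_1; auto; ring.
  - intros s Hs. apply Series_sums, G; auto.
Qed.

Lemma delta0_pmf : is_pmf delta0 /\ forall s, pgf delta0 s = 1.
Proof.
  assert (G : forall s, sums (fun k => delta0 k * s ^ k) 1).
  { intro s. apply (cv_ext (fun _ => 1)). 2: apply cv_const.
    intro n; induction n; simpl. unfold delta0; simpl; ring. rewrite <- IHn. unfold delta0; simpl; ring. }
  split; [split|].
  - intro k; unfold delta0; destruct (Nat.eqb k 0); lra.
  - apply (sums_eq _ _ _ _ (G 1)); auto. intro; rewrite pow1; ring.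
  - intro s. apply Series_sums, G.
Qed.

Lemma convpow_pmf a : is_pmf a -> forall m, is_pmf (convpow a m) /\
  forall s, 0 <= s <= 1 -> pgf (convpow a m) s = pgf a s ^ m.
Proof.
  intros Ha m. induction m as [|m [P E]]; simpl.
  - split. apply delta0_pmf. intros; apply delta0_pmf.
  - destruct (conv_pmf a _ Ha P) as [P2 E2]. split; auto.
    intros s Hs. rewrite E2, E; auto.
Qed.

(** * The law recursion of the process *)

Section LawRecursion.
Variables (g h p : nat -> nat -> R).
Hypothesis Hg : forall n, (1 <= n)%nat -> is_pmf (g n).
Hypothesis Hh : forall n, (1 <= n)%nat -> is_pmf (h n).
Hypothesis Hp : bpi_law g h p.

(* Summing the recursion over m first (Tonelli) gives
   E s^{X_{n+1}} = E[G_{n+1}(s)^{X_n}] H_{n+1}(s). *)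
Lemma bpi_step n : is_pmf (p n) -> forall s, 0 <= s <= 1 ->
  sums (fun k => p (S n) k * s ^ k) (pgf (p n) (pgf (g (S n)) s) * pgf (h (S n)) s).
Proof.
  intros Pn s Hs.
  assert (HgS := Hg (S n) ltac:(lia)). assert (HhS := Hh (S n) ltac:(lia)).
  destruct (pgf_sums _ s HgS Hs) as [_ Gs].
  destruct (pgf_sums _ _ Pn Gs) as [IP _].
  assert (Hlaw : forall m, is_pmf (conv (convpow (g (S n)) m) (h (S n))) /\
      forall s, 0 <= s <= 1 -> pgf (conv (convpow (g (S n)) m) (h (S n))) s
                               = pgf (g (S n)) s ^ m * pgf (h (S n)) s).
  { intro m. destruct (convpow_pmf _ HgS m) as [Pm Em]. destruct (conv_pmf _ _ Pm HhS) as [Pc Ec].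
    split; auto. intros; rewrite Ec, Em; auto. }
  apply (sums_tonelli (fun m k => p n m * conv (convpow (g (S n)) m) (h (S n)) k * s ^ k)
           (fun m => p n m * pgf (g (S n)) s ^ m * pgf (h (S n)) s)).
  - intros m k. apply Rmult_le_pos. apply Rmult_le_pos. apply Pn. apply (Hlaw m). apply pow_le; lra.
  - intro m. destruct (Hlaw m) as [Pc Ec]. destruct (pgf_sums _ s Pc Hs) as [Ic _].
    rewrite Ec in Ic; auto.
    apply (sums_eq _ _ _ _ (sums_scal (p n m) _ _ Ic)); intros; ring.
  - intro k. destruct Hp as [_ Hr].
    apply (sums_eq _ _ _ _ (sums_scal (s ^ k) _ _ (Hr n k))); intros; ring.
  - apply (sums_eq _ _ _ _ (sums_scal (pgf (h (S n)) s) _ _ IP)); intros; ring.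
Qed.

Lemma bpi_pmf : forall n, is_pmf (p n).
Proof.
  induction n.
  - destruct Hp as [-> _]. apply delta0_pmf.
  - split.
    + intro k. destruct Hp as [_ Hr]. apply (sums_nonneg _ _ (Hr n k)).
      intro m. apply Rmult_le_pos. apply IHn.
      destruct (convpow_pmf _ (Hg (S n) ltac:(lia)) m) as [Pm _].
      apply (conv_pmf _ _ Pm (Hh (S n) ltac:(lia))).
    + pose proof (bpi_step n IHn 1 ltac:(lra)) as I1.
      rewrite (pgf_1 (g (S n))), (pgf_1 (p n)), (pgf_1 (h (S n))) in I1; auto; try apply Hg; try apply Hh; try lia.
      apply (sums_eq _ _ _ _ I1). intro; rewrite pow1; ring. ring.
Qed.

Lemma bpi_pgf_rec n s : 0 <= s <= 1 ->
  pgf (p (S n)) s = pgf (p n) (pgf (g (S n)) s) * pgf (h (S n)) s.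
Proof. intro Hs. apply Series_sums. apply bpi_step; auto. apply bpi_pmf. Qed.

End LawRecursion.

(** * The continuity theorem for generating functions *)

Lemma pmf_le_1 a j : is_pmf a -> a j <= 1.
Proof.
  intros [P S]. apply Rle_trans with (sum_f_R0 a j).
  - destruct j; simpl. lra. pose proof (cond_pos_sum a j P). lra.
  - apply (sums_partial_le a 1 j S P).
Qed.

Lemma sum_f_R0_mono d K N : (forall j, 0 <= d j) -> (K <= N)%nat -> sum_f_R0 d K <= sum_f_R0 d N.
Proof. intros P H. induction H. lra. simpl. specialize (P (S m)). lra. Qed.

(* The remainder of the generating function after the terms of degree <= K
   is at most the geometric remainder x^(K+1)/(1-x), since a j <= 1. *)
Lemma pgf_tail_bound a x K : is_pmf a -> 0 < x < 1 ->
  0 <= pgf a x - sum_f_R0 (fun j => a j * x ^ j) K <= x ^ S K / (1 - x).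
Proof.
  intros Pa Hx. destruct (pgf_sums a x Pa ltac:(lra)) as [I _].
  assert (Pt : forall j, 0 <= a j * x ^ j) by (intro; apply Rmult_le_pos; [apply Pa|apply pow_le; lra]).
  assert (Pd : forall j, 0 <= x ^ j - a j * x ^ j).
  { intro j. pose proof (pmf_le_1 a j Pa). pose proof (pow_le x j ltac:(lra)). nra. }
  assert (0 < x ^ S K) by (apply pow_lt; lra).
  assert (0 < x ^ S K / (1 - x)) by (apply Rdiv_lt_0_compat; lra).
  pose proof (sums_partial_le _ _ K I Pt).
  split; [lra|].
  enough (pgf a x <= sum_f_R0 (fun j => a j * x ^ j) K + x ^ S K / (1 - x)) by lra.
  eapply cv_upper_bound; [|exact I]. intro N.
  destruct (le_lt_dec N K) as [HNK|HKN].
  - pose proof (sum_f_R0_mono _ _ _ Pt HNK). lra.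
  - pose proof (sum_f_R0_mono _ _ _ Pd (Nat.lt_le_incl _ _ HKN)) as D.
    rewrite !minus_sum, !tech3 in D by lra.
    assert (0 <= x ^ S N / (1 - x)) by (apply Rdiv_le_0_compat; [apply pow_le|]; lra).
    unfold Rdiv in *. lra.
Qed.

Definition pgf_head (a : nat -> R) (x : R) (k : nat) : R :=
  match k with O => 0 | S k' => sum_f_R0 (fun j => a j * x ^ j) k' end.

Lemma pgf_head_S a x k : sum_f_R0 (fun j => a j * x ^ j) k = pgf_head a x k + a k * x ^ k.
Proof. destruct k; simpl; ring. Qed.

Lemma pgf_coef_sandwich a x k : is_pmf a -> 0 < x < 1 ->
  0 <= (pgf a x - pgf_head a x k) / x ^ k - a k <= x / (1 - x).
Proof.
  intros Pa hx. pose proof (pgf_tail_bound a x k Pa hx) as T. rewrite pgf_head_S in T.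
  assert (0 < x ^ k) by (apply pow_lt; lra).
  replace ((pgf a x - pgf_head a x k) / x ^ k - a k)
    with ((pgf a x - (pgf_head a x k + a k * x ^ k)) / x ^ k) by (field; lra).
  replace (x / (1 - x)) with (x ^ S k / (1 - x) / x ^ k) by (simpl; field; lra).
  split. apply Rdiv_le_0_compat; lra.
  unfold Rdiv. apply Rmult_le_compat_r. left; apply Rinv_0_lt_compat; lra. lra.
Qed.

Section Continuity.
Variables (p : nat -> nat -> R) (F : R -> R).
Hypothesis Pp : forall n, is_pmf (p n).
Hypothesis HF : forall x, 0 < x < 1 -> Un_cv (fun n => pgf (p n) x) (F x).
Hypothesis HF1 : forall eps, eps > 0 -> exists x, 0 < x < 1 /\ F x > 1 - eps.

Lemma cv_pgf_head x k : (forall j, (j < k)%nat -> exists l, Un_cv (fun n => p n j) l) ->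
  exists L, Un_cv (fun n => pgf_head (p n) x k) L.
Proof.
  induction k as [|k IH]; intro H.
  - exists 0. apply (cv_const 0).
  - destruct IH as [L HL]. intros j hj; apply H; lia.
    destruct (H k ltac:(lia)) as [l Hl]. exists (L + l * x ^ k).
    apply (cv_ext (fun n => pgf_head (p n) x k + p n k * x ^ k)).
    + intro n. rewrite <- pgf_head_S. reflexivity.
    + apply CV_plus; auto. apply (CV_mult _ (fun _ => x ^ k)); auto. apply cv_const.
Qed.

(* Every coefficient sequence converges: by induction on k, the heads
   converge, and the sandwich shows (p n k)_n is Cauchy. *)
Lemma coef_limit_exists : forall k, exists l, Un_cv (fun n => p n k) l.
Proof.
  intro k. induction k as [k IH] using (well_founded_induction lt_wf).
  assert (Cau : Cauchy_crit (fun n => p n k)).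
  { intros e he. set (x := Rmin (1/2) (e/4)).
    assert (hx : 0 < x <= 1/2 /\ x <= e/4).
    { unfold x. repeat split. apply Rmin_glb_lt; lra. apply Rmin_l. apply Rmin_r. }
    assert (hx2 : x / (1 - x) <= e / 2).
    { apply (Rmult_le_reg_r (1 - x)). lra. unfold Rdiv. rewrite Rmult_assoc, Rinv_l; nra. }
    set (Rn n := (pgf (p n) x - pgf_head (p n) x k) / x ^ k).
    assert (CR : Cauchy_crit Rn).
    { destruct (cv_pgf_head x k IH) as [L HL].
      apply CV_Cauchy. exists ((F x - L) / x ^ k). unfold Rn, Rdiv.
      apply (CV_mult _ (fun _ => / x ^ k)). apply CV_minus; auto. apply HF; lra. apply cv_const. }
    destruct (CR (e / 2) ltac:(lra)) as [N HN]. exists N. intros n m hn hm.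
    specialize (HN n m hn hm). unfold Rdist in *. apply Rabs_def2 in HN.
    pose proof (pgf_coef_sandwich (p n) x k (Pp n) ltac:(lra)).
    pose proof (pgf_coef_sandwich (p m) x k (Pp m) ltac:(lra)).
    fold (Rn n) (Rn m) in *. apply Rabs_def1; lra. }
  destruct (Rcomplete.R_complete _ Cau) as [l Hl]. exists l. exact Hl.
Qed.

Section Limit.
Variable q : nat -> R.
Hypothesis Hq : forall k, Un_cv (fun n => p n k) (q k).

Lemma limit_nonneg k : 0 <= q k.
Proof. apply (cv_lower_bound _ _ 0 (fun n => proj1 (Pp n) k) (Hq k)). Qed.

Lemma limit_tail_bound x K : 0 < x < 1 ->
  0 <= F x - sum_f_R0 (fun k => q k * x ^ k) K <= x ^ S K / (1 - x).
Proof.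
  intro hx.
  assert (C : Un_cv (fun n => pgf (p n) x - sum_f_R0 (fun k => p n k * x ^ k) K)
                    (F x - sum_f_R0 (fun k => q k * x ^ k) K)).
  { apply CV_minus. auto. apply (cv_sum (fun n k => p n k * x ^ k)). intros.
    apply (CV_mult _ (fun _ => x ^ k)). auto. apply cv_const. }
  split.
  - apply (cv_lower_bound _ _ 0 (fun n => proj1 (pgf_tail_bound (p n) x K (Pp n) hx)) C).
  - apply (cv_upper_bound _ _ _ (fun n => proj2 (pgf_tail_bound (p n) x K (Pp n) hx)) C).
Qed.

Lemma limit_pgf x : 0 < x < 1 -> sums (fun k => q k * x ^ k) (F x).
Proof.
  intros hx e he. destruct (geometric_tail x e hx he) as [N HN]. exists N. intros K hK.
  specialize (HN K hK). pose proof (limit_tail_bound x K hx).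
  unfold Rdist. rewrite Rabs_minus_sym, Rabs_pos_eq; lra.
Qed.

(* No mass escapes: F x -> 1 as x -> 1 forces the total mass of q to be 1. *)
Lemma limit_pmf : is_pmf q.
Proof.
  split. exact limit_nonneg.
  intros e he. destruct (HF1 (e/2) ltac:(lra)) as [x [hx Fx]].
  destruct (geometric_tail x (e/2) hx ltac:(lra)) as [N HN]. exists N. intros K hK.
  specialize (HN K hK). pose proof (limit_tail_bound x K hx).
  assert (U : sum_f_R0 q K <= 1).
  { apply (cv_upper_bound (fun n => sum_f_R0 (p n) K)).
    - intro n. apply sums_partial_le; apply Pp.
    - apply cv_sum. auto. }
  assert (L : sum_f_R0 (fun k => q k * x ^ k) K <= sum_f_R0 q K).
  { apply sum_Rle. intros k _. pose proof (pow_le1 x k ltac:(lra)). pose proof (limit_nonneg k). nra. }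
  unfold Rdist. rewrite Rabs_minus_sym, Rabs_pos_eq; lra.
Qed.
End Limit.

Theorem pgf_continuity : exists q, is_pmf q /\ (forall k, Un_cv (fun n => p n k) (q k)) /\
  forall x, 0 < x < 1 -> sums (fun k => q k * x ^ k) (F x).
Proof.
  destruct (functional_choice (fun k l => Un_cv (fun n => p n k) l) coef_limit_exists) as [q Hq].
  exists q. split; [|split]; auto. apply limit_pmf; auto. apply limit_pgf; auto.
Qed.
End Continuity.

Fixpoint sum1 (f : nat -> R) (n : nat) : R :=
  match n with O => 0 | S n' => sum1 f n' + f n end.

Fixpoint prod1 (f : nat -> R) (n : nat) : R :=
  match n with O => 1 | S n' => prod1 f n' * f n end.

Lemma sum1_ext f g n : (forall k, (1 <= k <= n)%nat -> f k = g k) -> sum1 f n = sum1 g n.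
Proof. induction n; simpl; intros H; auto. rewrite IHn, (H (S n)); auto; try lia; intros; apply H; lia. Qed.

Lemma sum1_le f g n : (forall k, (1 <= k <= n)%nat -> f k <= g k) -> sum1 f n <= sum1 g n.
Proof.
  induction n; simpl; intros H. lra.
  assert (sum1 f n <= sum1 g n) by (apply IHn; intros; apply H; lia).
  specialize (H (S n) ltac:(lia)). lra.
Qed.

Lemma sum1_plus f g n : sum1 (fun k => f k + g k) n = sum1 f n + sum1 g n.
Proof. induction n; simpl; lra. Qed.

Lemma sum1_minus f g n : sum1 (fun k => f k - g k) n = sum1 f n - sum1 g n.
Proof. induction n; simpl; lra. Qed.

Lemma sum1_scal c f n : sum1 (fun k => c * f k) n = c * sum1 f n.
Proof. induction n; simpl; lra. Qed.

Lemma sum1_nonneg f n : (forall k, (1 <= k <= n)%nat -> 0 <= f k) -> 0 <= sum1 f n.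
Proof.
  intro H. apply Rle_trans with (sum1 (fun _ => 0) n).
  - clear H; induction n; simpl; lra.
  - apply sum1_le; auto.
Qed.

Lemma sum1_abs f n : Rabs (sum1 f n) <= sum1 (fun k => Rabs (f k)) n.
Proof.
  induction n; simpl. rewrite Rabs_R0; lra.
  apply Rle_trans with (Rabs (sum1 f n) + Rabs (f (S n))). apply Rabs_triang. lra.
Qed.

Lemma sum1_telescope a n : sum1 (fun k => a k - a (k - 1)%nat) n = a n - a 0%nat.
Proof. induction n; simpl. ring. rewrite IHn. replace (n - 0)%nat with n by lia. ring. Qed.

Lemma sum1_sum_f_R0 f n : sum1 f (S n) = sum_f_R0 (fun i => f (S i)) n.
Proof. induction n; simpl. ring. simpl in IHn. rewrite <- IHn. ring. Qed.

Lemma sum1_exchange (f : nat -> nat -> R) n N :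
  sum1 (fun k => sum_f_R0 (fun i => f k i) N) n = sum_f_R0 (fun i => sum1 (fun k => f k i) n) N.
Proof. induction n; simpl. induction N; simpl; lra. rewrite IHn, <- sum_plus. reflexivity. Qed.

Lemma sum1_mono f n m : (forall k, 0 <= f k) -> (n <= m)%nat -> sum1 f n <= sum1 f m.
Proof. intros P H. induction H. lra. simpl. specialize (P (S m)). lra. Qed.

Lemma sum1_truncate f K n : (forall k, (K <= k)%nat -> f k = 0) -> (forall k, 0 <= f k) ->
  sum1 f n <= sum1 f K.
Proof.
  intros Z P. induction n as [|n IH].
  - apply sum1_mono; auto. lia.
  - destruct (le_lt_dec (S n) K) as [h|h].
    + apply sum1_mono; auto.
    + simpl. rewrite (Z (S n)) by lia. lra.
Qed.

Lemma cv_sum1 (b : nat -> nat -> R) l K :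
  (forall k, (1 <= k <= K)%nat -> Un_cv (fun n => b n k) (l k)) ->
  Un_cv (fun n => sum1 (b n) K) (sum1 l K).
Proof.
  intro H. induction K; simpl. apply cv_const.
  apply (CV_plus (fun n => sum1 (b n) K) (fun n => b n (S K))).
  - apply IHK. intros; apply H; lia.
  - apply H; lia.
Qed.

Lemma prod1_ext f g n : (forall k, (1 <= k <= n)%nat -> f k = g k) -> prod1 f n = prod1 g n.
Proof. induction n; simpl; intros H; auto. rewrite IHn, (H (S n)); auto; try lia; intros; apply H; lia. Qed.

Lemma prod1_le f g n : (forall k, (1 <= k <= n)%nat -> 0 <= f k <= g k) -> 0 <= prod1 f n <= prod1 g n.
Proof.
  induction n; simpl; intros H. lra.
  destruct IHn as [A B]. intros; apply H; lia.
  destruct (H (S n) ltac:(lia)). split. apply Rmult_le_pos; lra. apply Rmult_le_compat; lra.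
Qed.

Lemma prod1_exp f n : prod1 (fun k => exp (f k)) n = exp (sum1 f n).
Proof. induction n; simpl. rewrite exp_0; auto. rewrite IHn, exp_plus. auto. Qed.

(** * Bonferroni bounds from factorial moments *)

Lemma fallfact_S_S i k : fallfact (S i) (S k) = (S i * fallfact i k)%nat.
Proof.
  induction k. simpl. lia.
  change (fallfact (S i) (S (S k))) with ((S i - S k) * fallfact (S i) (S k))%nat.
  rewrite IHk. simpl fallfact. replace (S i - S k)%nat with (i - k)%nat by lia. lia.
Qed.

Lemma fallfact_zero i k : (i < k)%nat -> fallfact i k = 0%nat.
Proof. intro H. induction H; simpl. rewrite Nat.sub_diag. lia. rewrite IHle. lia. Qed.

Lemma fallfact_pascal i j : fallfact (S i) (S j) = (fallfact i (S j) + S j * fallfact i j)%nat.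
Proof.
  rewrite fallfact_S_S. change (fallfact i (S j)) with ((i - j) * fallfact i j)%nat.
  destruct (le_lt_dec j i). nia. rewrite (fallfact_zero i j); lia.
Qed.

Definition binom (i j : nat) : R := INR (fallfact i j) / INR (fact j).

Lemma binom_pascal i j : binom (S i) (S j) = binom i (S j) + binom i j.
Proof.
  unfold binom. rewrite fact_simpl, mult_INR, fallfact_pascal, plus_INR, mult_INR.
  assert (INR (fact j) <> 0) by apply INR_fact_neq_0.
  assert (INR (S j) <> 0) by (apply not_0_INR; lia).
  field. auto.
Qed.

Lemma binom_0 i : binom i 0 = 1.
Proof. unfold binom. simpl. field. Qed.

Lemma binom_1 i : binom i 1 = INR i.
Proof. unfold binom. simpl. rewrite Nat.sub_0_r, Nat.mul_1_r. field. Qed.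

Lemma binom_0_S j : binom 0 (S j) = 0.
Proof. unfold binom. rewrite fallfact_zero by lia. unfold Rdiv. apply Rmult_0_l. Qed.

Lemma pow_one_minus_bounds t j : 0 <= t <= 1 ->
  1 - INR j * t <= (1 - t) ^ j <= 1 - INR j * t + INR j ^ 2 * t ^ 2.
Proof.
  intro H. induction j as [|j [L U]]. simpl. lra. rewrite S_INR. simpl.
  assert (0 <= INR j) by apply pos_INR. split.
  - assert ((1 - t) * (1 - INR j * t) <= (1 - t) * (1 - t) ^ j) by (apply Rmult_le_compat_l; lra). nra.
  - assert ((1 - t) * (1 - t) ^ j <= (1 - t) * (1 - INR j * t + INR j ^ 2 * t ^ 2))
      by (apply Rmult_le_compat_l; lra).
    simpl in H1. nra.
Qed.

Definition binom_rem (u : R) (i J : nat) : R :=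
  (1 - u) ^ i - sum_f_R0 (fun j => binom i j * (- u) ^ j) J.

Lemma binom_rem_rec u i J : binom_rem u (S i) (S J) = binom_rem u i (S J) - u * binom_rem u i J.
Proof.
  unfold binom_rem. rewrite !(decomp_sum _ (S J)) by lia. simpl pred. rewrite !binom_0.
  assert (E : sum_f_R0 (fun k => binom (S i) (S k) * (- u) ^ S k) J =
    sum_f_R0 (fun k => binom i (S k) * (- u) ^ S k) J + (- u) * sum_f_R0 (fun j => binom i j * (- u) ^ j) J).
  { rewrite scal_sum, <- sum_plus. apply sum_eq. intros. rewrite binom_pascal. simpl. ring. }
  rewrite E. simpl. ring.
Qed.

Lemma binom_rem_bounds u i J : 0 <= u <= 1 ->
  0 <= (-1) ^ S J * binom_rem u i J <= binom i (S J) * u ^ S J.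
Proof.
  intro Hu. revert J. induction i as [|i IH]; intro J.
  - unfold binom_rem. destruct J.
    + simpl sum_f_R0. rewrite binom_0, binom_0_S. cbn [pow]. lra.
    + rewrite decomp_sum by lia. simpl pred. rewrite binom_0.
      rewrite (sum_eq_R0 _ J) by (intros; rewrite binom_0_S; ring).
      rewrite binom_0_S. cbn [pow]. lra.
  - destruct J.
    + unfold binom_rem. simpl sum_f_R0. rewrite binom_0, binom_1.
      destruct (pow_one_minus_bounds u (S i) Hu) as [B1 _].
      assert ((1 - u) ^ S i <= 1) by (apply pow_le1; lra). cbn [pow] in *. lra.
    + rewrite binom_rem_rec. destruct (IH J) as [L1 U1]. destruct (IH (S J)) as [L2 U2].
      replace ((-1) ^ S (S J) * (binom_rem u i (S J) - u * binom_rem u i J)) with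
        ((-1) ^ S (S J) * binom_rem u i (S J) + u * ((-1) ^ S J * binom_rem u i J)) by (simpl; ring).
      replace (binom (S i) (S (S J)) * u ^ S (S J)) with
        (binom i (S (S J)) * u ^ S (S J) + u * (binom i (S J) * u ^ S J))
        by (rewrite binom_pascal; simpl; ring).
      assert (0 <= u * ((-1) ^ S J * binom_rem u i J) <= u * (binom i (S J) * u ^ S J)).
      { split. apply Rmult_le_pos; lra. apply Rmult_le_compat_l; lra. }
      lra.
Qed.

Lemma pgf_bonferroni a (M : nat -> R) J u : is_pmf a -> 0 <= u <= 1 ->
  (forall j, (j <= S J)%nat -> sums (fun i => INR (fallfact i j) * a i) (M j)) ->
  0 <= (-1) ^ S J * (pgf a (1 - u) - sum_f_R0 (fun j => M j / INR (fact j) * (- u) ^ j) J)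
    <= M (S J) / INR (fact (S J)) * u ^ S J.
Proof.
  intros Pa Hu HM. assert (Hf : forall j, INR (fact j) <> 0) by (intro; apply INR_fact_neq_0).
  destruct (pgf_sums a (1 - u) Pa ltac:(lra)) as [I1 _].
  assert (I2 : sums (fun i => a i * sum_f_R0 (fun j => binom i j * (- u) ^ j) J)
                 (sum_f_R0 (fun j => M j / INR (fact j) * (- u) ^ j) J)).
  { apply (sums_eq _ _ _ _ (sums_finsum (fun i j => ((- u) ^ j / INR (fact j)) * (INR (fallfact i j) * a i))
               (fun j => ((- u) ^ j / INR (fact j)) * M j) J (fun j hj => sums_scal _ _ _ (HM j ltac:(lia))))).
    - intro i. rewrite scal_sum. apply sum_eq. intros. unfold binom. field. auto.
    - apply sum_eq. intros. field. auto. }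
  assert (I3 : sums (fun i => a i * ((-1) ^ S J * binom_rem u i J))
    ((-1) ^ S J * (pgf a (1 - u) - sum_f_R0 (fun j => M j / INR (fact j) * (- u) ^ j) J))).
  { apply (sums_eq _ _ _ _ (sums_scal ((-1) ^ S J) _ _ (sums_plus _ _ _ _ I1 (sums_scal (-1) _ _ I2)))).
    intro i. unfold binom_rem. ring. ring. }
  assert (I4 : sums (fun i => a i * (binom i (S J) * u ^ S J)) (M (S J) / INR (fact (S J)) * u ^ S J)).
  { apply (sums_eq _ _ _ _ (sums_scal (u ^ S J / INR (fact (S J))) _ _ (HM (S J) ltac:(lia)))).
    intro i. unfold binom. field. auto. field. auto. }
  destruct Pa as [Pa _]. split.
  - apply (sums_nonneg _ _ I3). intro i. destruct (binom_rem_bounds u i J Hu).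
    apply Rmult_le_pos; auto.
  - apply (sums_le _ _ _ _ I3 I4). intro i. destruct (binom_rem_bounds u i J Hu).
    apply Rmult_le_compat_l; auto.
Qed.

Lemma pow_diff_bound a b j : 0 <= b <= a -> a ^ S j - b ^ S j <= INR (S j) * a ^ j * (a - b).
Proof.
  intro H. induction j. simpl. lra.
  replace (a ^ S (S j) - b ^ S (S j)) with (a * (a ^ S j - b ^ S j) + b ^ S j * (a - b)) by (simpl; ring).
  assert (b ^ S j <= a ^ S j) by (apply pow_incr; lra).
  apply Rle_trans with (a * (INR (S j) * a ^ j * (a - b)) + a ^ S j * (a - b)).
  - apply Rplus_le_compat. apply Rmult_le_compat_l; lra. apply Rmult_le_compat_r; lra.
  - rewrite (S_INR (S j)). simpl. right; ring.
Qed.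

(* One step of the backward recursion, raised to the power J = j+1: if
   v lies within G u^2/2 below rh u, then u^J - v^J equals J (1-rh) u^J up to
   an error that is small relative to (1-rh) u^J once J^2 (1-rh) and
   J G / (1-rh) are small. *)
Lemma power_step_error j (rh G u v e : R) : 0 <= rh < 1 -> 0 <= G -> 0 <= u <= 1 -> 0 <= v ->
  rh * u - G * u ^ 2 / 2 <= v <= rh * u ->
  INR (S j) ^ 2 * (1 - rh) <= e -> INR (S j) * G <= e * (1 - rh) ->
  Rabs (INR (S j) * (1 - rh) * u ^ S j - (u ^ S j - v ^ S j)) <= e * ((1 - rh) * u ^ S j).
Proof.
  intros Hrh HG Hu Hv Hb He1 He2.
  set (J := INR (S j)) in *. set (U := u ^ S j).
  assert (HJ : 0 < J) by (apply lt_0_INR; lia).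
  assert (HU : 0 <= U) by (apply pow_le; lra).
  (* (rh u)^J is within the second order binomial bounds of U *)
  destruct (pow_one_minus_bounds (1 - rh) (S j) ltac:(lra)) as [B1 B2].
  replace (1 - (1 - rh)) with rh in B1, B2 by ring. fold J in B1, B2.
  assert (E1 : (rh * u) ^ S j = rh ^ S j * U) by apply Rpow_mult_distr.
  assert (U1 : rh ^ S j * U <= (1 - J * (1 - rh) + J ^ 2 * (1 - rh) ^ 2) * U) by (apply Rmult_le_compat_r; lra).
  assert (U2 : (1 - J * (1 - rh)) * U <= rh ^ S j * U) by (apply Rmult_le_compat_r; lra).
  assert (U3 : J ^ 2 * (1 - rh) ^ 2 * U <= e * (1 - rh) * U).
  { replace (J ^ 2 * (1 - rh) ^ 2 * U) with ((J ^ 2 * (1 - rh)) * ((1 - rh) * U)) by ring.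
    replace (e * (1 - rh) * U) with (e * ((1 - rh) * U)) by ring.
    apply Rmult_le_compat_r; nra. }
  (* v^J is within J u^(j+2) G/2 below (rh u)^J *)
  assert (V1 : v ^ S j <= (rh * u) ^ S j) by (apply pow_incr; lra).
  assert (V2 : (rh * u) ^ S j - v ^ S j <= J * (rh * u) ^ j * (rh * u - v)) by (apply pow_diff_bound; lra).
  assert (V3 : (rh * u) ^ j <= u ^ j) by (apply pow_incr; split; nra).
  assert (V4 : 0 <= (rh * u) ^ j) by (apply pow_le; nra).
  assert (V5 : 0 <= u ^ j) by (apply pow_le; lra).
  assert (V6 : u ^ j * u ^ 2 <= U).
  { unfold U. replace (u ^ S j) with (u ^ j * u) by (simpl; ring).
    assert (0 <= u ^ j * u) by (apply Rmult_le_pos; lra). nra. }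
  assert (V7 : J * (rh * u) ^ j * (rh * u - v) <= (J * G) * U / 2).
  { apply Rle_trans with (J * u ^ j * (G * u ^ 2 / 2)).
    - apply Rmult_le_compat. nra. lra. apply Rmult_le_compat_l; lra. lra.
    - replace (J * u ^ j * (G * u ^ 2 / 2)) with ((J * G) * (u ^ j * u ^ 2) / 2) by field.
      apply Rmult_le_compat_r. lra. apply Rmult_le_compat_l; nra. }
  assert (V8 : (J * G) * U <= e * (1 - rh) * U) by (apply Rmult_le_compat_r; lra).
  assert (0 <= e * (1 - rh) * U) by (assert (0 <= J ^ 2 * (1 - rh)) by nra; nra).
  apply Rabs_le. split; nra.
Qed.

Lemma toeplitz_vanish (b w : nat -> nat -> R) :
  (forall n k, (1 <= k <= n)%nat -> 0 <= w n k) -> (forall n, sum1 (w n) n <= 1) ->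
  (forall k, (1 <= k)%nat -> Un_cv (fun n => b n k) 0) ->
  (forall eps, eps > 0 -> exists K, forall n k, (K <= k <= n)%nat -> Rabs (b n k) <= eps * w n k) ->
  Un_cv (fun n => sum1 (b n) n) 0.
Proof.
  intros Pw Bw Hb Hk e he. destruct (Hk (e / 4) ltac:(lra)) as [K HK].
  (* the first K columns, which tend to 0 *)
  set (f n k := if (k <? K)%nat then Rabs (b n k) else 0).
  assert (Pf : forall n k, 0 <= f n k) by (intros n k; unfold f; destruct (k <? K)%nat; [apply Rabs_pos|lra]).
  assert (Cf : Un_cv (fun n => sum1 (f n) K) 0).
  { replace 0 with (sum1 (fun _ => 0) K) by (clear; induction K; simpl; lra).
    apply cv_sum1. intros k hk. unfold f. destruct (k <? K)%nat.
    - intros e' he'. destruct (Hb k ltac:(lia) e' he') as [N HN]. exists N. intros n hn.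
      specialize (HN n hn). unfold Rdist in *. rewrite Rminus_0_r, Rabs_Rabsolu in *. auto.
    - apply cv_const. }
  destruct (Cf (e / 2) ltac:(lra)) as [N HN]. exists N. intros n hn. specialize (HN n hn).
  unfold Rdist in *. rewrite Rminus_0_r in *. rewrite Rabs_pos_eq in HN by (apply sum1_nonneg; auto).
  assert (A1 : sum1 (f n) n <= sum1 (f n) K).
  { apply sum1_truncate; auto. intros k hk. unfold f. replace (k <? K)%nat with false; auto.
    symmetry. apply Nat.ltb_ge. lia. }
  assert (A2 : Rabs (sum1 (b n) n) <= sum1 (f n) n + e / 4 * sum1 (w n) n).
  { rewrite <- sum1_scal, <- sum1_plus. eapply Rle_trans. apply sum1_abs. apply sum1_le.
    intros k hk. unfold f. destruct (k <? K)%nat eqn:E.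
    - pose proof (Pw n k hk). nra.
    - apply Nat.ltb_ge in E. pose proof (HK n k ltac:(lia)). lra. }
  assert (0 <= sum1 (w n) n) by (apply sum1_nonneg; intros; apply Pw; auto).
  specialize (Bw n). nra.
Qed.

(** * Asymptotics of the backward iterates *)

(* u n k stands for 1 - G_(k+1) o ... o G_n (1 - r); only the recursion
   bounds Hrec, obtained from the Taylor bounds of G_k at 1, are used. *)
Section Asymptotics.
Variables (rho G2 : nat -> R) (r : R) (u : nat -> nat -> R).
Hypothesis Hr : 0 < r < 1.
Hypothesis Hrho : forall k, (1 <= k)%nat -> 0 <= rho k < 1.
Hypothesis HG2 : forall k, (1 <= k)%nat -> 0 <= G2 k.
Hypothesis Hrho1 : Un_cv rho 1.
Hypothesis Hdelta : Un_cv (fun n => G2 n / (1 - rho n)) 0.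
Hypothesis Hinf : cv_infty (fun N => sum_f_R0 (fun n => 1 - rho (S n)) N).
Hypothesis Hun : forall n, u n n = r.
Hypothesis Hrange : forall n k, 0 <= u n k <= r.
Hypothesis Hrec : forall n k, (1 <= k <= n)%nat ->
  rho k * u n k - G2 k * u n k ^ 2 / 2 <= u n (k - 1)%nat <= rho k * u n k.

(* u n k <= r exp (- sum_(k<i<=n) (1 - rho i)), by iterating the step bound
   u n (k-1) <= rho k u n k <= exp (rho k - 1) u n k. *)
Lemma u_exp_bound n k : (k <= n)%nat ->
  u n k <= r * exp (- (sum1 (fun i => 1 - rho i) n - sum1 (fun i => 1 - rho i) k)).
Proof.
  set (rs := sum1 (fun i => 1 - rho i)).
  intro H. remember (n - k)%nat as d. revert k H Heqd. induction d; intros k H Hd.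
  - replace k with n by lia. rewrite Hun, Rminus_diag, Ropp_0, exp_0. lra.
  - assert (IH := IHd (S k) ltac:(lia) ltac:(lia)).
    destruct (Hrec n (S k) ltac:(lia)) as [_ R2]. replace (S k - 1)%nat with k in R2 by lia.
    assert (rho (S k) <= exp (rho (S k) - 1)) by (pose proof (exp_ineq1_le (rho (S k) - 1)); lra).
    pose proof (Hrange n (S k)). destruct (Hrho (S k)); try lia.
    assert (E : rs (S k) = rs k + (1 - rho (S k))) by reflexivity. rewrite E in IH.
    replace (- (rs n - rs k)) with (- (rs n - (rs k + (1 - rho (S k)))) + (rho (S k) - 1)) by ring.
    rewrite exp_plus. apply Rle_trans with (rho (S k) * u n (S k)); auto.
    apply Rle_trans with (exp (rho (S k) - 1) * (r * exp (- (rs n - (rs k + (1 - rho (S k))))))).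
    + apply Rmult_le_compat; lra.
    + right; ring.
Qed.

(* Because sum (1 - rho k) diverges, each u n k tends to 0 as n grows. *)
Lemma u_to_0 k : Un_cv (fun n => u n k) 0.
Proof.
  set (rs := sum1 (fun i => 1 - rho i)).
  intros e he. destruct (Hinf (rs k + r / e)) as [N HN]. exists (max k (S N)). intros n hn.
  assert (hs : rs k + r / e < rs n).
  { destruct n. lia. unfold rs. rewrite sum1_sum_f_R0. apply HN. lia. }
  unfold Rdist. rewrite Rminus_0_r, Rabs_pos_eq by apply Hrange.
  eapply Rle_lt_trans. apply u_exp_bound; lia. fold rs.
  set (t := rs n - rs k). assert (r / e < t) by (unfold t; lra).
  assert (1 + t <= exp t) by apply exp_ineq1_le. assert (0 < exp t) by apply exp_pos.
  assert (r / e * e = r) by (field; lra).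
  rewrite exp_Ropp. apply (Rmult_lt_reg_r (exp t)); auto. rewrite Rmult_assoc, Rinv_l by lra. nra.
Qed.

(* The weights (1 - rho k) u n k ^ j have total mass <= 1: they are bounded by
   the increments u n k - u n (k-1), which telescope. *)
Lemma weighted_mass_le_1 n j : (1 <= j)%nat -> sum1 (fun k => (1 - rho k) * u n k ^ j) n <= 1.
Proof.
  intro hj. apply Rle_trans with (sum1 (fun k => u n k - u n (k - 1)%nat) n).
  - apply sum1_le. intros k hk. destruct (Hrec n k hk) as [_ R2]. destruct (Hrho k); try lia.
    pose proof (Hrange n k).
    assert (u n k ^ j <= u n k).
    { destruct j. lia. assert (u n k ^ j <= 1) by (apply pow_le1; lra). simpl. nra. }
    assert (0 <= u n k ^ j) by (apply pow_le; lra). nra.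
  - rewrite sum1_telescope, Hun. pose proof (Hrange n 0). lra.
Qed.

Lemma weights_nonneg j n k : (1 <= k)%nat -> 0 <= (1 - rho k) * u n k ^ j.
Proof. intros hk. destruct (Hrho k hk). apply Rmult_le_pos. lra. apply pow_le, Hrange. Qed.

Lemma power_step_eventually j e : e > 0 -> exists K, forall n k, (K <= k <= n)%nat ->
  Rabs (INR (S j) * (1 - rho k) * u n k ^ S j - (u n k ^ S j - u n (k - 1)%nat ^ S j))
    <= e * ((1 - rho k) * u n k ^ S j).
Proof.
  intro he. set (J := INR (S j)). assert (HJ : 0 < J) by (apply lt_0_INR; lia).
  destruct (Hrho1 (e / J ^ 2) ltac:(apply Rdiv_lt_0_compat; nra)) as [K1 HK1].
  destruct (Hdelta (e / J) ltac:(apply Rdiv_lt_0_compat; lra)) as [K2 HK2].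
  exists (max 1 (max K1 K2)). intros n k hk.
  specialize (HK1 k ltac:(lia)). specialize (HK2 k ltac:(lia)). unfold Rdist in *.
  destruct (Hrho k); try lia. rewrite Rminus_0_r in HK2.
  apply Rabs_def2 in HK1. apply Rabs_def2 in HK2.
  pose proof (Hrange n k). pose proof (Hrange n (k - 1)%nat).
  apply (power_step_error j (rho k) (G2 k)); try lra; auto.
  - apply HG2; lia.
  - apply Hrec; lia.
  - fold J. apply Rlt_le. replace e with (J ^ 2 * (e / J ^ 2)) by (field; lra).
    apply Rmult_lt_compat_l; nra.
  - fold J. replace (J * G2 k) with (J * (G2 k / (1 - rho k)) * (1 - rho k)) by (field; lra).
    apply Rmult_le_compat_r. lra. replace e with (J * (e / J)) by (field; lra).
    apply Rmult_le_compat_l; lra.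
Qed.

(* sum_{k<=n} (1 - rho k) u n k ^ J -> r^J / J: telescoping the J-th powers
   of the recursion, with errors removed by toeplitz_vanish. *)
Lemma weighted_power_limit j :
  Un_cv (fun n => sum1 (fun k => (1 - rho k) * u n k ^ S j) n) (r ^ S j / INR (S j)).
Proof.
  set (J := INR (S j)). assert (HJ : 0 < J) by (apply lt_0_INR; lia).
  set (b n k := J * (1 - rho k) * u n k ^ S j - (u n k ^ S j - u n (k - 1)%nat ^ S j)).
  assert (Hb : Un_cv (fun n => sum1 (b n) n) 0).
  { apply (toeplitz_vanish b (fun n k => (1 - rho k) * u n k ^ S j)).
    - intros n k hk. apply weights_nonneg. lia.
    - intro n. apply weighted_mass_le_1. lia.
    - intros k _. unfold b. replace 0 with (J * (1 - rho k) * 0 ^ S j - (0 ^ S j - 0 ^ S j)) by (simpl; ring).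
      apply CV_minus. apply cv_scal, cv_pow, u_to_0. apply CV_minus; apply cv_pow, u_to_0.
    - intros e he. destruct (power_step_eventually j e he) as [K HK]. exists K. exact HK. }
  apply (cv_ext (fun n => (r ^ S j - u n 0%nat ^ S j + sum1 (b n) n) / J)).
  - intro n. unfold b. rewrite sum1_minus, (sum1_telescope (fun k => u n k ^ S j)), Hun.
    rewrite (sum1_ext _ (fun k => J * ((1 - rho k) * u n k ^ S j))) by (intros; ring).
    rewrite sum1_scal. field. lra.
  - replace (r ^ S j / J) with ((r ^ S j - 0 ^ S j + 0) / J) by (simpl; field; lra).
    unfold Rdiv. apply (CV_mult _ (fun _ => / J)). 2: apply cv_const.
    apply CV_plus; auto. apply CV_minus. apply cv_const. apply cv_pow, u_to_0.
Qed.

Lemma weighted_power_limit_coef j (a : nat -> R) al : Un_cv a al ->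
  Un_cv (fun n => sum1 (fun k => (1 - rho k) * a k * u n k ^ S j) n) (al * r ^ S j / INR (S j)).
Proof.
  intro Ha.
  assert (Hb : Un_cv (fun n => sum1 (fun k => (1 - rho k) * (a k - al) * u n k ^ S j) n) 0).
  { apply (toeplitz_vanish _ (fun n k => (1 - rho k) * u n k ^ S j)).
    - intros n k hk. apply weights_nonneg. lia.
    - intro n. apply weighted_mass_le_1. lia.
    - intros k _. replace 0 with ((1 - rho k) * (a k - al) * 0 ^ S j) by (simpl; ring).
      apply cv_scal, cv_pow, u_to_0.
    - intros e he. destruct (Ha e he) as [K HK]. exists (max 1 K). intros n k hk.
      specialize (HK k ltac:(lia)). unfold Rdist in HK. pose proof (weights_nonneg (S j) n k ltac:(lia)).
      replace ((1 - rho k) * (a k - al) * u n k ^ S j) with ((a k - al) * ((1 - rho k) * u n k ^ S j)) by ring.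
      rewrite Rabs_mult, (Rabs_pos_eq ((1 - rho k) * _)) by lra. nra. }
  apply (cv_ext (fun n => al * sum1 (fun k => (1 - rho k) * u n k ^ S j) n
                          + sum1 (fun k => (1 - rho k) * (a k - al) * u n k ^ S j) n)).
  - intro n. rewrite <- sum1_scal, <- sum1_plus. apply sum1_ext. intros; ring.
  - replace (al * r ^ S j / INR (S j)) with (al * (r ^ S j / INR (S j)) + 0) by (unfold Rdiv; ring).
    apply CV_plus; auto. apply cv_scal, weighted_power_limit.
Qed.

Variables (h m : nat -> nat -> R) (lam : nat -> R) (Sl : R).
Hypothesis Hh : forall k, (1 <= k)%nat -> is_pmf (h k).
Hypothesis Hm : forall k j, (1 <= k)%nat -> (1 <= j)%nat -> fmoment (h k) j (m k j).
Hypothesis Hlam : forall j, (1 <= j)%nat -> Un_cv (fun k => m k j / (INR j * (1 - rho k))) (lam j).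
Hypothesis Hser : sums (fun i => (-1) ^ i * (lam (S i) * r ^ S i / INR (fact (S i)))) Sl.
Hypothesis Htail : Un_cv (fun N => lam (S N) * r ^ S N / INR (fact (S N))) 0.

(* Factorial moments of every order, including the total mass for j = 0. *)
Definition hmoment k j := if (j =? 0)%nat then 1 else m k j.

Lemma hmoment_sums k j : (1 <= k)%nat -> sums (fun i => INR (fallfact i j) * h k i) (hmoment k j).
Proof.
  intro hk. unfold hmoment. destruct j; cbn [Nat.eqb].
  - destruct (Hh k hk) as [_ S]. apply (sums_eq _ _ _ _ S); intros; simpl; ring.
  - apply Hm; lia.
Qed.

Lemma m_nonneg k j : (1 <= k)%nat -> (1 <= j)%nat -> 0 <= m k j.
Proof.
  intros hk hj. apply (sums_nonneg _ _ (Hm k j hk hj)). intro i.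
  apply Rmult_le_pos. apply pos_INR. apply (Hh k hk).
Qed.

Definition mnorm k i := m k (S i) / (INR (fact (S i)) * (1 - rho k)).

Lemma mnorm_cv i : Un_cv (fun k => mnorm k i) (lam (S i) * INR (S i) / INR (fact (S i))).
Proof.
  apply (cv_ext_eventually (fun k => (m k (S i) / (INR (S i) * (1 - rho k))) * (INR (S i) / INR (fact (S i))))).
  - exists 1%nat. intros k hk. unfold mnorm. destruct (Hrho k); try lia.
    assert (INR (S i) <> 0) by (apply not_0_INR; lia). assert (INR (fact (S i)) <> 0) by apply INR_fact_neq_0.
    field. repeat split; auto; lra.
  - replace (lam (S i) * INR (S i) / INR (fact (S i)))
      with (lam (S i) * (INR (S i) / INR (fact (S i)))) by (unfold Rdiv; ring).
    apply (CV_mult _ (fun _ => INR (S i) / INR (fact (S i)))).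
    apply Hlam; lia. apply cv_const.
Qed.

Definition defect n k := 1 - pgf (h k) (1 - u n k).

(* First-order Bonferroni bounds: 0 <= defect <= m k 1 u n k. *)
Lemma defect_bounds n k : (1 <= k)%nat -> 0 <= defect n k <= m k 1%nat * u n k.
Proof.
  intro hk. pose proof (Hrange n k).
  destruct (pgf_bonferroni (h k) (hmoment k) 0 (u n k) (Hh k hk) ltac:(lra) (fun j _ => hmoment_sums k j hk)).
  unfold defect, hmoment in *. simpl in *. lra.
Qed.

(* The defect is < 1 since the generating function is positive. *)
Lemma defect_lt_1 n k : (1 <= k)%nat -> defect n k < 1.
Proof.
  intro hk. unfold defect. pose proof (Hrange n k).
  pose proof (pgf_pos (h k) (1 - u n k) (Hh k hk) ltac:(lra)). lra.
Qed.

Lemma defect_expansion n k N : (1 <= k)%nat ->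
  Rabs (defect n k - sum_f_R0 (fun i => (-1) ^ i * (m k (S i) / INR (fact (S i)) * u n k ^ S i)) N)
    <= m k (S (S N)) / INR (fact (S (S N))) * u n k ^ S (S N).
Proof.
  intro hk. pose proof (Hrange n k).
  destruct (pgf_bonferroni (h k) (hmoment k) (S N) (u n k) (Hh k hk) ltac:(lra)
              (fun j _ => hmoment_sums k j hk)) as [A B].
  set (T := sum_f_R0 (fun i => (-1) ^ i * (m k (S i) / INR (fact (S i)) * u n k ^ S i)) N).
  assert (E : sum_f_R0 (fun j => hmoment k j / INR (fact j) * (- u n k) ^ j) (S N) = 1 - T).
  { rewrite decomp_sum by lia. simpl pred.
    replace (hmoment k 0 / INR (fact 0) * (- u n k) ^ 0) with 1 by (unfold hmoment; simpl; field).
    replace (1 - T) with (1 + -1 * T) by ring. unfold T. rewrite scal_sum. f_equal.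
    apply sum_eq. intros i _. unfold hmoment. cbn [Nat.eqb].
    replace (- u n k) with ((-1) * u n k) by ring. rewrite Rpow_mult_distr. simpl pow. ring. }
  rewrite E in A, B. unfold hmoment in B. simpl Nat.eqb in B. cbv iota in B.
  replace ((-1) ^ S (S N)) with ((-1) ^ N) in A, B by (simpl; ring).
  unfold defect. replace (1 - pgf (h k) (1 - u n k) - T) with (- (pgf (h k) (1 - u n k) - (1 - T))) by ring.
  rewrite Rabs_Ropp. destruct (pow_m1_cases N) as [e|e]; rewrite e in A, B.
  - rewrite Rabs_pos_eq; lra.
  - rewrite Rabs_left1; lra.
Qed.

Lemma moment_sum_limit i :
  Un_cv (fun n => sum1 (fun k => m k (S i) / INR (fact (S i)) * u n k ^ S i) n)
        (lam (S i) * r ^ S i / INR (fact (S i))).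
Proof.
  assert (INR (fact (S i)) <> 0) by apply INR_fact_neq_0.
  assert (INR (S i) <> 0) by (apply not_0_INR; lia).
  apply (cv_ext (fun n => sum1 (fun k => (1 - rho k) * mnorm k i * u n k ^ S i) n)).
  - intro n. apply sum1_ext. intros k hk. unfold mnorm. destruct (Hrho k); try lia.
    field. split; auto; lra.
  - replace (lam (S i) * r ^ S i / INR (fact (S i))) with
      (lam (S i) * INR (S i) / INR (fact (S i)) * r ^ S i / INR (S i)) by (field; auto).
    apply weighted_power_limit_coef, mnorm_cv.
Qed.

Lemma defect_sum_limit : Un_cv (fun n => sum1 (defect n) n) Sl.
Proof.
  set (c n i := sum1 (fun k => m k (S i) / INR (fact (S i)) * u n k ^ S i) n).
  set (A n N := sum_f_R0 (fun i => (-1) ^ i * c n i) N).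
  set (T N := sum_f_R0 (fun i => (-1) ^ i * (lam (S i) * r ^ S i / INR (fact (S i)))) N).
  assert (HA : forall N, Un_cv (fun n => A n N) (T N)).
  { intro N. apply (cv_sum (fun n i => (-1) ^ i * c n i)). intros i _. apply cv_scal, moment_sum_limit. }
  assert (HB : forall n N, Rabs (sum1 (defect n) n - A n N) <= c n (S N)).
  { intros n N. unfold A, c.
    rewrite (sum_eq _ (fun i => sum1 (fun k => (-1) ^ i * (m k (S i) / INR (fact (S i)) * u n k ^ S i)) n))
      by (intros; symmetry; apply sum1_scal).
    rewrite <- sum1_exchange, <- sum1_minus. eapply Rle_trans. apply sum1_abs.
    apply sum1_le. intros k hk. apply defect_expansion. lia. }
  intros e he.
  destruct (Hser (e / 4) ltac:(lra)) as [N1 HN1]. destruct (Htail (e / 4) ltac:(lra)) as [N2 HN2].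
  set (N := max N1 N2).
  specialize (HN1 N ltac:(unfold N; lia)). specialize (HN2 (S N) ltac:(unfold N; lia)).
  destruct (HA N (e / 4) ltac:(lra)) as [n1 Hn1].
  destruct (moment_sum_limit (S N) (e / 4) ltac:(lra)) as [n2 Hn2].
  exists (max n1 n2). intros n hn. specialize (Hn1 n ltac:(lia)). specialize (Hn2 n ltac:(lia)).
  specialize (HB n N). fold (T N) in HN1. fold (c n (S N)) in Hn2. unfold Rdist in *.
  rewrite Rminus_0_r in HN2. apply Rabs_def2 in Hn1. apply Rabs_def2 in Hn2. apply Rabs_def2 in HN1.
  apply Rabs_def2 in HN2. apply Rabs_le_between in HB. apply Rabs_def1; lra.
Qed.

Lemma defect_to_0 k : (1 <= k)%nat -> Un_cv (fun n => defect n k) 0.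
Proof.
  intro hk. apply (cv_squeeze (fun _ => 0) _ (fun n => m k 1%nat * u n k)).
  - exists 0%nat. intros. apply defect_bounds; auto.
  - apply cv_const.
  - replace 0 with (m k 1%nat * 0) by ring. apply cv_scal, u_to_0.
Qed.

(* The immigration means m k 1 ~ (1 - rho k) lam 1 tend to 0. *)
Lemma mean_immigration_to_0 : Un_cv (fun k => m k 1%nat) 0.
Proof.
  apply (cv_ext_eventually (fun k => (1 - rho k) * mnorm k 0)).
  - exists 1%nat. intros k hk. unfold mnorm. destruct (Hrho k); try lia. simpl. field. lra.
  - replace 0 with ((1 - 1) * (lam 1%nat * INR 1 / INR (fact 1))) by ring.
    apply CV_mult. apply (CV_minus (fun _ => 1)). apply cv_const. auto. apply mnorm_cv.
Qed.

Lemma quotient_le_twice_square y : 0 <= y <= 1/2 -> 0 <= y ^ 2 / (1 - y) <= 2 * y ^ 2.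
Proof.
  intro hy. split. apply Rdiv_le_0_compat; nra.
  apply (Rmult_le_reg_r (1 - y)). lra. unfold Rdiv. rewrite Rmult_assoc, Rinv_l by lra. nra.
Qed.

Lemma defect_square_sum_vanish : Un_cv (fun n => sum1 (fun k => defect n k ^ 2 / (1 - defect n k)) n) 0.
Proof.
  apply (toeplitz_vanish _ (fun n k => (1 - rho k) * u n k ^ 1)).
  - intros n k hk. apply weights_nonneg. lia.
  - intro n. apply weighted_mass_le_1. lia.
  - intros k hk. apply (cv_squeeze (fun _ => 0) _ (fun n => 2 * defect n k ^ 2)).
    + destruct (defect_to_0 k hk (1/2) ltac:(lra)) as [N HN]. exists N. intros n hn. specialize (HN n hn).
      unfold Rdist in HN. rewrite Rminus_0_r in HN. apply Rabs_def2 in HN.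
      destruct (defect_bounds n k hk). apply quotient_le_twice_square. lra.
    + apply cv_const.
    + replace 0 with (2 * 0 ^ 2) by ring. apply cv_scal, cv_pow, defect_to_0; auto.
  - intros e he.
    assert (C : Un_cv (fun k => 2 * m k 1%nat * mnorm k 0) 0).
    { replace 0 with (2 * 0 * (lam 1%nat * INR 1 / INR (fact 1))) by ring.
      apply CV_mult. apply cv_scal, mean_immigration_to_0. apply mnorm_cv. }
    destruct (C e he) as [K1 HK1]. destruct (mean_immigration_to_0 (1/2) ltac:(lra)) as [K2 HK2].
    exists (max 1 (max K1 K2)). intros n k hk.
    specialize (HK1 k ltac:(lia)). specialize (HK2 k ltac:(lia)). unfold Rdist in *. rewrite Rminus_0_r in *.
    apply Rabs_def2 in HK1. apply Rabs_def2 in HK2.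
    destruct (defect_bounds n k ltac:(lia)) as [Y1 Y2]. pose proof (Hrange n k). destruct (Hrho k); try lia.
    pose proof (m_nonneg k 1 ltac:(lia) ltac:(lia)).
    assert (m k 1%nat * u n k <= m k 1%nat) by nra.
    assert (Hy : defect n k <= 1 / 2) by lra.
    destruct (quotient_le_twice_square (defect n k) ltac:(lra)) as [Q0 Q1].
    rewrite pow_1, Rabs_pos_eq by lra.
    (* defect^2/(1-defect) <= 2 (m k 1 u n k)^2 <= (2 m k 1 mnorm k 0) ((1 - rho k) u n k) *)
    assert (Q2 : defect n k ^ 2 <= m k 1%nat * (m k 1%nat * u n k)).
    { replace (defect n k ^ 2) with (defect n k * defect n k) by ring. apply Rmult_le_compat; lra. }
    assert (Q3 : 2 * (m k 1%nat * (m k 1%nat * u n k)) = (2 * m k 1%nat * mnorm k 0) * ((1 - rho k) * u n k)).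
    { unfold mnorm. simpl. field. lra. }
    assert (0 <= (1 - rho k) * u n k) by nra.
    assert ((2 * m k 1%nat * mnorm k 0) * ((1 - rho k) * u n k) <= e * ((1 - rho k) * u n k))
      by (apply Rmult_le_compat_r; lra).
    lra.
Qed.

Lemma one_minus_exp_bounds y : 0 <= y < 1 ->
  exp (- (y + y ^ 2 / (1 - y))) <= 1 - y <= exp (- y).
Proof.
  intro hy. split.
  - replace (y + y ^ 2 / (1 - y)) with (y / (1 - y)) by (field; lra).
    pose proof (exp_ineq1_le (y / (1 - y))). pose proof (exp_pos (y / (1 - y))).
    rewrite exp_Ropp. apply (Rmult_le_reg_r (exp (y / (1 - y)))); auto. rewrite Rinv_l by lra.
    assert (1 + y / (1 - y) = / (1 - y)) by (field; lra).
    assert (1 = (1 - y) * / (1 - y)) by (field; lra). nra.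
  - pose proof (exp_ineq1_le (- y)). lra.
Qed.

Lemma defect_product_limit : Un_cv (fun n => prod1 (fun k => 1 - defect n k) n) (exp (- Sl)).
Proof.
  assert (Cexp : forall v l, Un_cv v l -> Un_cv (fun n => exp (v n)) (exp l)).
  { intros v l Hv. apply (continuity_seq exp); auto. apply derivable_continuous, derivable_exp. }
  apply (cv_squeeze (fun n => exp (sum1 (fun k => - (defect n k + defect n k ^ 2 / (1 - defect n k))) n)) _
                    (fun n => exp (sum1 (fun k => - defect n k) n))).
  - exists 0%nat. intros n _. rewrite <- !prod1_exp. split; apply prod1_le; intros k hk;
      pose proof (defect_bounds n k ltac:(lia)); pose proof (defect_lt_1 n k ltac:(lia));
      pose proof (one_minus_exp_bounds (defect n k) ltac:(lra)); split; try lra; left; apply exp_pos.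
  - apply Cexp. replace (- Sl) with (-1 * (Sl + 0)) by ring.
    apply (cv_ext (fun n => -1 * (sum1 (defect n) n + sum1 (fun k => defect n k ^ 2 / (1 - defect n k)) n))).
    + intro n. rewrite <- sum1_plus, <- sum1_scal. apply sum1_ext. intros; ring.
    + apply cv_scal, CV_plus. apply defect_sum_limit. apply defect_square_sum_vanish.
  - apply Cexp. replace (- Sl) with (-1 * Sl) by ring.
    apply (cv_ext (fun n => -1 * sum1 (defect n) n)).
    + intro n. rewrite <- sum1_scal. apply sum1_ext. intros; ring.
    + apply cv_scal, defect_sum_limit.
Qed.
End Asymptotics.

(** * The limit exponent L(x) = sum_l (x-1)^l lam_l / l! *)

Section LimitExponent.
Variable lam : nat -> R.
Hypothesis Hnn : forall j, (1 <= j)%nat -> 0 <= lam j.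
Hypothesis Hii2 : limsup_le_1 (fun n => nroot n (lam n / INR (fact n))).

Lemma lam_geometric eta : eta > 0 ->
  exists N0, forall n, (n >= N0)%nat -> lam n / INR (fact n) <= (1 + eta) ^ n.
Proof.
  intro he. destruct (Hii2 eta he) as [N HN]. exists (max 1 N). intros n hn. specialize (HN n ltac:(lia)).
  assert (0 < (1 + eta) ^ n) by (apply pow_lt; lra).
  unfold nroot in HN. destruct (Rle_dec (lam n / INR (fact n)) 0). lra.
  set (z := lam n / INR (fact n)) in *.
  assert (E : z = Rpower (Rpower z (/ INR n)) (INR n)).
  { rewrite Rpower_mult, Rinv_l, Rpower_1; auto; try lra. apply not_0_INR. lia. }
  rewrite E, <- Rpower_pow by lra. apply Rle_Rpower_l. apply pos_INR.
  split; auto. unfold Rpower. apply exp_pos.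
Qed.

Definition lam_coef i := lam (S i) / INR (fact (S i)).

Lemma lam_coef_nonneg i : 0 <= lam_coef i.
Proof. unfold lam_coef. apply Rdiv_le_0_compat. apply Hnn; lia. apply INR_fact_lt_0. Qed.

Lemma lam_coef_geometric s : 0 <= s < 1 ->
  exists N0 q, 0 <= q < 1 /\ forall i, (i >= N0)%nat -> lam_coef i * s ^ S i <= q ^ S i.
Proof.
  intro hs. set (eta := (1 - s) / (1 + s)). assert (eta > 0) by (unfold eta; apply Rdiv_lt_0_compat; lra).
  destruct (lam_geometric eta H) as [N0 HN0]. exists N0, ((1 + eta) * s). split.
  - split. apply Rmult_le_pos; lra. unfold eta. apply (Rmult_lt_reg_r (1 + s)). lra.
    replace ((1 + (1 - s) / (1 + s)) * s * (1 + s)) with (2 * s) by (field; lra). lra.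
  - intros i hi. rewrite Rpow_mult_distr. apply Rmult_le_compat_r. apply pow_le; lra. apply HN0. lia.
Qed.

Lemma lam_series_summable s : 0 <= s < 1 -> exists l, sums (fun i => lam_coef i * s ^ S i) l.
Proof.
  intro hs. destruct (lam_coef_geometric s hs) as [N0 [q [hq Hb]]].
  assert (Pt : forall i, 0 <= lam_coef i * s ^ S i)
    by (intro; apply Rmult_le_pos; [apply lam_coef_nonneg|apply pow_le; lra]).
  assert (ex_series (fun i => lam_coef i * s ^ S i)) as [l Hl].
  { apply (ex_series_incr_n _ N0).
    apply (@ex_series_le R_AbsRing R_CompleteNormedModule _ (fun k => scal (q ^ S N0) (q ^ k))).
    - intro k. change (norm ?x) with (Rabs x). rewrite Rabs_pos_eq by apply Pt.
      change (scal (q ^ S N0) (q ^ k)) with (q ^ S N0 * q ^ k). rewrite <- pow_add. apply Hb. lia.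
    - apply (@ex_series_scal_l R_AbsRing R_NormedModule), ex_series_geom. rewrite Rabs_pos_eq; lra. }
  exists l. now apply is_series_Reals.
Qed.

Lemma lam_tail_to_0 s : 0 <= s < 1 -> Un_cv (fun N => lam (S N) * s ^ S N / INR (fact (S N))) 0.
Proof.
  intro hs. destruct (lam_coef_geometric s hs) as [N0 [q [hq Hb]]].
  apply (cv_squeeze (fun _ => 0) _ (fun N => q ^ S N)).
  - exists N0. intros N hN. specialize (Hb N hN).
    replace (lam (S N) * s ^ S N / INR (fact (S N))) with (lam_coef N * s ^ S N)
      by (unfold lam_coef; field; apply INR_fact_neq_0).
    split; auto. apply Rmult_le_pos. apply lam_coef_nonneg. apply pow_le; lra.
  - apply cv_const.
  - intros e he. destruct (pow_lt_1_zero q ltac:(rewrite Rabs_pos_eq; lra) e he) as [N HN].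
    exists N. intros n hn. unfold Rdist. rewrite Rminus_0_r. apply HN. lia.
Qed.

Definition Lx (x : R) : R := Series (fun i => (x - 1) ^ S i / INR (fact (S i)) * lam (S i)).

Lemma Lx_sums x : 0 < x <= 1 -> sums (fun i => (x - 1) ^ S i / INR (fact (S i)) * lam (S i)) (Lx x).
Proof.
  intro hx. destruct (lam_series_summable (1 - x) ltac:(lra)) as [l Hl].
  assert (E : forall i, (x - 1) ^ S i / INR (fact (S i)) * lam (S i)
                        = (-1) ^ S i * (lam_coef i * (1 - x) ^ S i)).
  { intro i. unfold lam_coef. replace (x - 1) with (-1 * (1 - x)) by ring.
    rewrite Rpow_mult_distr. field. apply INR_fact_neq_0. }
  destruct (sums_abs_dominated (fun i => (x - 1) ^ S i / INR (fact (S i)) * lam (S i))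
                                 (fun i => lam_coef i * (1 - x) ^ S i) l) as [L HL].
  - intro i. rewrite E, Rabs_mult, pow_1_abs, Rmult_1_l, Rabs_pos_eq. lra.
    apply Rmult_le_pos. apply lam_coef_nonneg. apply pow_le; lra.
  - exact Hl.
  - unfold Lx. rewrite (Series_sums _ _ HL). auto.
Qed.

(* L(x) -> 0 as x -> 1, hence exp (L x) -> 1: |L(1-r)| <= 4 r A for r <= 1/4,
   where A is the value of the dominating series at 1/4. *)
Lemma Lx_exp_near_1 : forall eps, eps > 0 -> exists x, 0 < x < 1 /\ exp (Lx x) > 1 - eps.
Proof.
  intros e he. destruct (lam_series_summable (1/4) ltac:(lra)) as [A HA].
  assert (A0 : 0 <= A) by (apply (sums_nonneg _ _ HA); intro; apply Rmult_le_pos;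
                             [apply lam_coef_nonneg|apply pow_le; lra]).
  set (r := Rmin (1/4) (e / (8 * A + 8))).
  assert (hr : 0 < r <= 1/4 /\ r <= e / (8 * A + 8)).
  { unfold r. repeat split. apply Rmin_glb_lt. lra. apply Rdiv_lt_0_compat; lra. apply Rmin_l. apply Rmin_r. }
  assert (hr2 : r * (8 * A + 8) <= e).
  { replace e with (e / (8 * A + 8) * (8 * A + 8)) by (field; lra). apply Rmult_le_compat_r; lra. }
  exists (1 - r). split. lra.
  destruct (lam_series_summable r ltac:(lra)) as [B HB].
  assert (L1 : - Lx (1 - r) <= B).
  { replace (- Lx (1 - r)) with (-1 * Lx (1 - r)) by ring.
    apply (sums_le _ _ _ _ (sums_scal (-1) _ _ (Lx_sums (1 - r) ltac:(lra))) HB).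
    intro i. replace (1 - r - 1) with (-1 * r) by ring. rewrite Rpow_mult_distr.
    assert (0 <= lam_coef i * r ^ S i) by (apply Rmult_le_pos; [apply lam_coef_nonneg|apply pow_le; lra]).
    replace (-1 * ((-1) ^ S i * r ^ S i / INR (fact (S i)) * lam (S i)))
      with (- (-1) ^ S i * (lam_coef i * r ^ S i)) by (unfold lam_coef; field; apply INR_fact_neq_0).
    destruct (pow_m1_cases (S i)) as [E|E]; rewrite E; lra. }
  assert (L2 : B <= 4 * r * A).
  { apply (sums_le _ _ _ _ HB (sums_scal (4 * r) _ _ HA)). intro i.
    assert (r ^ S i <= 4 * r * (1/4) ^ S i).
    { simpl. replace (4 * r * (1 / 4 * (1 / 4) ^ i)) with (r * (1/4) ^ i) by field.
      apply Rmult_le_compat_l. lra. apply pow_incr. lra. }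
    pose proof (lam_coef_nonneg i). nra. }
  pose proof (exp_ineq1_le (Lx (1 - r))). nra.
Qed.
End LimitExponent.

(* backward_comp g n k x = G_(k+1) o ... o G_n (x), where G_i = pgf (g i). *)
Fixpoint backward_comp (g : nat -> nat -> R) (n k : nat) (x : R) : R :=
  match n with
  | O => x
  | S n' => if (S n' <=? k)%nat then x else backward_comp g n' k (pgf (g (S n')) x)
  end.

Lemma backward_comp_id g n k x : (n <= k)%nat -> backward_comp g n k x = x.
Proof. destruct n; cbn [backward_comp]; auto. intro H. replace (S n <=? k)%nat with true; auto. symmetry; apply Nat.leb_le; auto. Qed.

Lemma backward_comp_S g n k x : (k <= n)%nat ->
  backward_comp g (S n) k x = backward_comp g n k (pgf (g (S n)) x).
Proof. intro H. cbn [backward_comp]. replace (S n <=? k)%nat with false; auto. symmetry; apply Nat.leb_gt; lia. Qed.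

Lemma backward_comp_step g n k x : (1 <= k <= n)%nat ->
  backward_comp g n (k - 1) x = pgf (g k) (backward_comp g n k x).
Proof.
  revert x. induction n; intros x H. lia.
  destruct (Nat.eq_dec k (S n)) as [->|].
  - rewrite (backward_comp_id g (S n) (S n)) by lia. replace (S n - 1)%nat with n by lia.
    rewrite backward_comp_S, backward_comp_id by lia. auto.
  - rewrite !backward_comp_S by lia. apply IHn. lia.
Qed.

Section Main.
Variables (g h p : nat -> nat -> R) (rho G2 : nat -> R) (m : nat -> nat -> R) (lam : nat -> R).
Hypothesis Hg : forall n, (1 <= n)%nat -> is_pmf (g n).
Hypothesis Hh : forall n, (1 <= n)%nat -> is_pmf (h n).
Hypothesis Hp : bpi_law g h p.
Hypothesis Hrho : forall n, (1 <= n)%nat -> fmoment (g n) 1 (rho n).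
Hypothesis HG2 : forall n, (1 <= n)%nat -> fmoment (g n) 2 (G2 n).
Hypothesis Hm : forall n k, (1 <= n)%nat -> (1 <= k)%nat -> fmoment (h n) k (m n k).
Hypothesis Hi1 : forall n, (1 <= n)%nat -> rho n < 1.
Hypothesis Hi2 : Un_cv rho 1.
Hypothesis Hi3 : cv_infty (fun N => sum_f_R0 (fun n => 1 - rho (S n)) N).
Hypothesis Hi4 : Un_cv (fun n => G2 n / (1 - rho n)) 0.
Hypothesis Hii1 : forall j, (1 <= j)%nat -> Un_cv (fun n => m n j / (INR j * (1 - rho n))) (lam j).
Hypothesis Hii2 : limsup_le_1 (fun n => nroot n (lam n / INR (fact n))).

Lemma fmoment_nonneg a k M : is_pmf a -> fmoment a k M -> 0 <= M.
Proof. intros Pa HM. apply (sums_nonneg _ _ HM). intro i. apply Rmult_le_pos. apply pos_INR. apply Pa. Qed.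

Lemma offspring_moments_sums k j : (1 <= k)%nat -> (j <= 2)%nat ->
  sums (fun i => INR (fallfact i j) * g k i) (match j with O => 1 | 1%nat => rho k | _ => G2 k end).
Proof.
  intros hk hj. destruct j as [|[|[|j]]]; try lia.
  - destruct (Hg k hk) as [_ S]. apply (sums_eq _ _ _ _ S); intros; simpl; ring.
  - apply Hrho; auto.
  - apply HG2; auto.
Qed.

Lemma offspring_taylor_bounds k u : (1 <= k)%nat -> 0 <= u <= 1 ->
  rho k * u - G2 k * u ^ 2 / 2 <= 1 - pgf (g k) (1 - u) <= rho k * u.
Proof.
  intros hk hu.
  destruct (pgf_bonferroni (g k) _ 1 u (Hg k hk) hu (fun j hj => offspring_moments_sums k j hk hj)) as [A B].
  simpl in A, B. lra.
Qed.

(* Since rho k < 1, the subcritical generating functions push [0,1] up. *)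
Lemma backward_comp_range n k s : 0 <= s <= 1 -> s <= backward_comp g n k s <= 1.
Proof.
  revert s. induction n; intros s hs. simpl. lra.
  destruct (le_lt_dec (S n) k). rewrite backward_comp_id; auto. lra.
  rewrite backward_comp_S by lia.
  destruct (offspring_taylor_bounds (S n) (1 - s) ltac:(lia) ltac:(lra)) as [_ B].
  replace (1 - (1 - s)) with s in B by ring.
  pose proof (Hi1 (S n) ltac:(lia)). pose proof (fmoment_nonneg _ _ _ (Hg (S n) ltac:(lia)) (Hrho (S n) ltac:(lia))).
  destruct (pgf_sums (g (S n)) s (Hg (S n) ltac:(lia)) hs) as [_ C].
  assert (s <= pgf (g (S n)) s) by nra.
  destruct (IHn (pgf (g (S n)) s) ltac:(lra)). lra.
Qed.

Lemma bpi_pgf_product n x : 0 <= x <= 1 ->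
  pgf (p n) x = prod1 (fun k => pgf (h k) (backward_comp g n k x)) n.
Proof.
  revert x. induction n; intros x hx.
  - simpl. destruct Hp as [-> _]. apply delta0_pmf.
  - rewrite (bpi_pgf_rec g h p Hg Hh Hp n x hx). cbn [prod1].
    destruct (pgf_sums (g (S n)) x (Hg (S n) ltac:(lia)) hx) as [_ C].
    rewrite (IHn _ C), backward_comp_id by lia. f_equal.
    apply prod1_ext. intros k hk. rewrite backward_comp_S by lia. auto.
Qed.

(* lam j is a limit of nonnegative normalised moments. *)
Lemma lam_nonneg j : (1 <= j)%nat -> 0 <= lam j.
Proof.
  intro hj. apply (cv_nonneg_eventually (fun n => m n j / (INR j * (1 - rho n)))); [|exact (Hii1 j hj)].
  exists 1%nat. intros n hn. apply Rdiv_le_0_compat.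
  - apply (fmoment_nonneg (h n) j). apply Hh; lia. apply Hm; lia.
  - apply Rmult_lt_0_compat. apply lt_0_INR; lia. pose proof (Hi1 n ltac:(lia)). lra.
Qed.

Lemma bpi_pgf_limit x : 0 < x < 1 -> Un_cv (fun n => pgf (p n) x) (exp (Lx lam x)).
Proof.
  intro hx. set (r := 1 - x). set (u n k := 1 - backward_comp g n k x).
  assert (Hrange : forall n k, 0 <= u n k <= r)
    by (intros n k; unfold u, r; pose proof (backward_comp_range n k x ltac:(lra)); lra).
  assert (Hrec : forall n k, (1 <= k <= n)%nat ->
    rho k * u n k - G2 k * u n k ^ 2 / 2 <= u n (k - 1)%nat <= rho k * u n k).
  { intros n k hk. pose proof (offspring_taylor_bounds k (u n k) ltac:(lia) ltac:(pose proof (Hrange n k); unfold r in *; lra)).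
    unfold u in *. rewrite backward_comp_step by auto.
    replace (1 - (1 - backward_comp g n k x)) with (backward_comp g n k x) in H by ring. exact H. }
  assert (Hser : sums (fun i => (-1) ^ i * (lam (S i) * r ^ S i / INR (fact (S i)))) (- Lx lam x)).
  { apply (sums_eq _ _ _ _ (sums_scal (-1) _ _ (Lx_sums lam lam_nonneg Hii2 x ltac:(lra)))).
    - intro i. unfold r. replace (x - 1) with (-1 * (1 - x)) by ring. rewrite Rpow_mult_distr.
      simpl pow at 1. field. apply INR_fact_neq_0.
    - ring. }
  pose proof (defect_product_limit rho G2 r u ltac:(unfold r; lra)
    (fun k hk => conj (fmoment_nonneg _ _ _ (Hg k hk) (Hrho k hk)) (Hi1 k hk))
    (fun k hk => fmoment_nonneg _ _ _ (Hg k hk) (HG2 k hk)) Hi2 Hi4 Hi3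
    (fun n => ltac:(unfold u, r; rewrite backward_comp_id; auto)) Hrange Hrec h m lam (- Lx lam x)
    Hh Hm Hii1 Hser (lam_tail_to_0 lam lam_nonneg Hii2 r ltac:(unfold r; lra))) as H.
  rewrite Ropp_involutive in H. revert H. apply cv_ext. intro n.
  rewrite bpi_pgf_product by lra. apply prod1_ext. intros k hk.
  unfold defect, u. replace (1 - (1 - backward_comp g n k x)) with (backward_comp g n k x) by ring. ring.
Qed.
End Main.

Theorem theorem4
  (g h : nat -> nat -> R) (p : nat -> nat -> R)
  (rho G2 : nat -> R) (m : nat -> nat -> R) (lam : nat -> R)
  (Hg : forall n, (1 <= n)%nat -> is_pmf (g n))
  (Hh : forall n, (1 <= n)%nat -> is_pmf (h n))
  (Hp : bpi_law g h p)
  (Hrho : forall n, (1 <= n)%nat -> fmoment (g n) 1 (rho n))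
  (HG2 : forall n, (1 <= n)%nat -> fmoment (g n) 2 (G2 n))
  (Hm : forall n k, (1 <= n)%nat -> (1 <= k)%nat -> fmoment (h n) k (m n k))
  (Hi1 : forall n, (1 <= n)%nat -> rho n < 1)
  (Hi2 : Un_cv rho 1)
  (Hi3 : cv_infty (fun N => sum_f_R0 (fun n => 1 - rho (S n)) N))
  (Hi4 : Un_cv (fun n => G2 n / (1 - rho n)) 0)
  (Hii1 : forall j, (1 <= j)%nat ->
            Un_cv (fun n => m n j / (INR j * (1 - rho n))) (lam j))
  (Hii2 : limsup_le_1 (fun n => nroot n (lam n / INR (fact n)))) :
  exists q : nat -> R,
    is_pmf q /\
    (forall k, Un_cv (fun n => p n k) (q k)) /\
    (forall x, 0 < x < 1 ->
       exists L,
         infinite_sum (fun i => (x - 1) ^ (S i) / INR (fact (S i)) * lam (S i)) L /\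
         infinite_sum (fun k => q k * x ^ k) (exp L)).
Proof.
  assert (Hlam : forall j, (1 <= j)%nat -> 0 <= lam j)
    by exact (lam_nonneg h rho m lam Hh Hm Hi1 Hii1).
  (* the generating functions converge to exp (L x), and L x -> 0 as x -> 1 *)
  destruct (pgf_continuity p (fun x => exp (Lx lam x)) (bpi_pmf g h p Hg Hh Hp)
              (bpi_pgf_limit g h p rho G2 m lam Hg Hh Hp Hrho HG2 Hm Hi1 Hi2 Hi3 Hi4 Hii1 Hii2)
              (Lx_exp_near_1 lam Hlam Hii2)) as [q [Pq [Cq Iq]]].
  exists q. split; [exact Pq | split; [exact Cq |]].
  intros x hx. exists (Lx lam x). split.
  - apply Lx_sums; auto. lra.
  - apply Iq; auto.
Qed.
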